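(* Let $p\in(0,1)$, $d\ge2$ an integer, and fix $r_1,r_2\in\mathbb{R}$ with $r_2-r_1>0$. With $x_i=\big[-\kappa^2\frac{2}{d-1}r_it^{2/3}-\kappa s_it^{1/3}\big]$ and $n_i=\big[\frac{p(d-1)}{d(d-p)}t+\kappa^2\frac{2}{d(d-1)}r_it^{2/3}\big]$, there is a constant $C_1$ independent of $t$ such that for any $s_1,s_2\in\mathbb{R}$ the bound $$\kappa t^{1/3}\Big(\frac{d}{d-1}\Big)^{x_2+dn_2-(x_1+dn_1)}\Big(\frac{d^d}{(d-1)^{d-1}}\Big)^{n_1-n_2}\binom{x_1-x_2-1}{n_2-n_1-1}\le C_1e^{-|s_2-s_1|}$$ holds for $t$ large enough.
   Context: $\kappa=\frac{(2(1-p)p)^{1/3}(d(d-1))^{2/3}}{d-p}$; $[\cdot]$ is the integer part; $\binom{a}{b}=\frac{a!}{b!(a-b)!}$ for $0\le b\le a$ and $0$ otherwise. *)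

From mathcomp Require Import all_boot all_order all_algebra.
From mathcomp Require Import reals sequences exp.
Set Implicit Arguments. Unset Strict Implicit. Unset Printing Implicit Defensive.
Import Order.TTheory GRing.Theory Num.Theory.
Local Open Scope ring_scope.

Definition binz (a b : int) : nat :=
  if (0 <= b) && (b <= a) then 'C(`|a|%N, `|b|%N) else 0%N.

Section Defs.
Variable R : realType.
Variables (p d : R).

Definition kappa : R :=
  powR (2 * (1 - p) * p) (1 / 3) * powR (d * (d - 1)) (2 / 3) / (d - p).

Definition xi (r s t : R) : int :=
  Num.floor (- kappa ^+ 2 * (2 / (d - 1)) * r * powR t (2 / 3)
             - kappa * s * powR t (1 / 3)).

Definition ni (r t : R) : int :=
  Num.floor (p * (d - 1) / (d * (d - p)) * t
             + kappa ^+ 2 * (2 / (d * (d - 1))) * r * powR t (2 / 3)).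
End Defs.

From mathcomp Require Import all_boot all_order all_algebra.
From mathcomp Require Import reals sequences exp binomial_distribution.
From mathcomp Require Import ring lra.

(* Put X = x1 - x2, N = n2 - n1 and tau = t^(1/3).  Then X = c tau^2 + kappa (s2 - s1) tau + O(1)
   and N = c tau^2 / d + O(1) with c = 2 kappa^2 (r2 - r1) / (d - 1), and the left-hand side is
   kappa tau (1/d)^N (1 - 1/d)^(X-N) C(X-1, N-1) <= kappa tau P[Bin(X, 1/d) = N].
   The standard deviation of Bin(X, 1/d) is of order tau, while N lies about kappa |s2 - s1| tau / d
   away from the mean X/d.  Two elementary estimates on a binomial pmf finish the proof.  It is at
   most 2/(w+1) when w(w+1) is below the variance: from a point on the lower side of the mean, the
   ratio of consecutive values keeps the next w values above half of it, and all of them sum to at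
   most 1.  And it decays like exp(-D^2/(2n)) at distance D from the mean, again by comparing
   consecutive values.  Hence kappa tau P[Bin(X, 1/d) = N] <= C exp(-gamma (s2 - s1)^2), and
   exp(-gamma x^2) <= exp(1/(4 gamma)) exp(-|x|). *)

Set Implicit Arguments. Unset Strict Implicit. Unset Printing Implicit Defensive.
Import Order.TTheory GRing.Theory Num.Theory.
Local Open Scope ring_scope.

Section binomial_pmf_bounds.
Variable R : realType.
Implicit Types (p s : R) (n k j w D : nat).

Lemma binomial_pmfE n p k :
  binomial_pmf n p k = 'C(n, k)%:R * p ^+ k * (1 - p) ^+ (n - k).
Proof. by rewrite /binomial_pmf -mulr_natl mulrA. Qed.

Lemma binomial_pmf_sum n p : \sum_(k < n.+1) binomial_pmf n p k = 1.
Proof.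
rewrite -[RHS](expr1n _ n) -[1 in RHS](subrK p) exprDn.
by apply: eq_bigr => k _; rewrite binomial_pmfE -mulr_natl; ring.
Qed.

Lemma binomial_pmf_small n p k : (n < k)%N -> binomial_pmf n p k = 0.
Proof. by move=> ltnk; rewrite binomial_pmfE bin_small // !mul0r. Qed.

Lemma binomial_pmf_sym n p k : (k <= n)%N ->
  binomial_pmf n p k = binomial_pmf n (1 - p) (n - k).
Proof.
move=> lekn; rewrite !binomial_pmfE bin_sub // subKn //.
have -> : 1 - (1 - p) = p by ring.
ring.
Qed.

Lemma binomial_pmfS n p k : (k < n)%N ->
  binomial_pmf n p k.+1 * (k.+1%:R * (1 - p))
  = binomial_pmf n p k * ((n - k)%:R * p).
Proof.
move=> ltkn; rewrite !binomial_pmfE.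
have binE : k.+1%:R * 'C(n, k.+1)%:R = (n - k)%:R * 'C(n, k)%:R :> R.
  by rewrite -!natrM mul_bin_left.
transitivity (k.+1%:R * 'C(n, k.+1)%:R * p ^+ k.+1 * (1 - p) ^+ (n - k.+1).+1).
  by rewrite !exprS; ring.
by rewrite binE (subnSK ltkn) exprS; ring.
Qed.

Lemma binomial_pmf_window_step n p k j : 0 < p < 1 -> k%:R <= n%:R * p ->
  (k + j < n)%N -> j.+1%:R <= n%:R * p * (1 - p) ->
  binomial_pmf n p (k + j) * (n%:R * p * (1 - p) - j.+1%:R)
  <= binomial_pmf n p (k + j).+1 * (n%:R * p * (1 - p)).
Proof.
move=> /andP[p0 p1] lekn ltkjn leA; set A := n%:R * p * (1 - p) in leA *.
have pos : 0 < (k + j).+1%:R * (1 - p) by apply: mulr_gt0; rewrite ?ltr0n ?subr_gt0.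
rewrite -(ler_pM2r pos) [X in _ <= X]mulrAC binomial_pmfS // -!mulrA.
apply: ler_wpM2l; first by apply: binomial_pmf_ge0; lra.
rewrite natrB ?(ltnW ltkjn) // -!natr1 !natrD; rewrite -natr1 in leA.
set K := k%:R in lekn *; set J := j%:R in leA *; set N := n%:R in lekn A leA *.
have J0 : 0 <= J by rewrite ler0n.
have A0 : 0 <= A by lra.
have ratioE : (N - (K + J)) * (p * A) - (A - (J + 1)) * ((K + J + 1) * (1 - p))
  = (N * p - K) * (A * p + (A - J - 1) * (1 - p)) + A * p + (J + 1) ^+ 2 * (1 - p).
  by rewrite /A; ring.
rewrite -subr_ge0 ratioE.
apply: addr_ge0; [apply: addr_ge0|]; apply: mulr_ge0; rewrite ?sqr_ge0 //; try lra.
by apply: addr_ge0; apply: mulr_ge0; lra.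
Qed.

Lemma binomial_pmf_window_ge n p k w j : 0 < p < 1 -> k%:R <= n%:R * p ->
  (k + w < n)%N -> (w * w.+1)%:R <= n%:R * p * (1 - p) -> (j <= w)%N ->
  binomial_pmf n p k * (2 * (n%:R * p * (1 - p)) - (j * j.+1)%:R)
  <= binomial_pmf n p (k + j) * (2 * (n%:R * p * (1 - p))).
Proof.
move=> p01 lekn ltkwn leA; set A := n%:R * p * (1 - p) in leA *.
have pmf0 i : 0 <= binomial_pmf n p i by apply: binomial_pmf_ge0; lra.
elim: j => [|j IH] lejw; first by rewrite addn0 mul0n subr0.
have {}IH := IH (ltnW lejw).
have leA1 : j.+1%:R <= A.
  by apply: le_trans leA; rewrite ler_nat (leq_trans lejw) ?leq_pmulr.
have A0 : 0 < A by apply: lt_le_trans leA1; rewrite ltr0n.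
have ltkjn : (k + j < n)%N by apply: leq_ltn_trans ltkwn; rewrite leq_add2l ltnW.
have step := binomial_pmf_window_step p01 lekn ltkjn leA1.
rewrite addnS -(ler_pM2r A0).
apply: (@le_trans _ _ (binomial_pmf n p k * (2 * A - (j * j.+1)%:R) * (A - j.+1%:R))).
  rewrite -!mulrA; apply: ler_wpM2l => //.
  have J0 : 0 <= j%:R :> R by rewrite ler0n.
  rewrite -subr_ge0 !natrM -[j.+2]addn2 -[j.+1]addn1 !natrD.
  have -> : (2 * A - j%:R * (j%:R + 1)) * (A - (j%:R + 1))
      - (2 * A - (j%:R + 1) * (j%:R + 2%:R)) * A = j%:R * (j%:R + 1) ^+ 2 by ring.
  by apply: mulr_ge0; rewrite ?sqr_ge0.
apply: le_trans (ler_wpM2r _ IH) _; first lra.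
have A2 : 0 <= 2 * A by lra.
have := ler_wpM2l A2 step; rewrite -/A.
lra.
Qed.

Lemma ler_sum_window (f : nat -> R) n k m : (forall i, 0 <= f i) ->
  (k + m <= n)%N -> \sum_(j < m) f (k + j) <= \sum_(i < n) f i.
Proof.
move=> f0 lekmn.
have -> : \sum_(j < m) f (k + j) = \sum_(k <= i < k + m) f i.
  rewrite -{2}(add0n k) big_addn addKn big_mkord.
  by apply: eq_bigr => j _; rewrite addnC.
rewrite -(big_mkord xpredT f) (big_cat_nat (leq0n k) (leq_trans (leq_addr m k) lekmn)) /=.
rewrite (big_cat_nat (leq_addr m k) lekmn) /=.
have [s1 s2] : 0 <= \sum_(0 <= i < k) f i /\ 0 <= \sum_(k + m <= i < n) f i.
  by split; apply: sumr_ge0.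
lra.
Qed.

Lemma binomial_pmf_window_le n p k w : 0 < p < 1 -> k%:R <= n%:R * p ->
  w.+1%:R <= n%:R * (1 - p) -> (w * w.+1)%:R <= n%:R * p * (1 - p) ->
  binomial_pmf n p k <= 2 / w.+1%:R.
Proof.
move=> p01 lekn lewn leA; have /andP[p0 p1] := p01.
have pmf0 i : 0 <= binomial_pmf n p i by apply: binomial_pmf_ge0; lra.
have ltkwn : (k + w < n)%N by rewrite -(ltr_nat R) natrD; rewrite -natr1 in lewn; lra.
have A0 : 0 < n%:R * p * (1 - p).
  by rewrite !mulr_gt0 ?subr_gt0 // ltr0n (leq_ltn_trans _ ltkwn).
have half j : (j <= w)%N -> binomial_pmf n p k / 2 <= binomial_pmf n p (k + j).
  move=> lejw; have := binomial_pmf_window_ge p01 lekn ltkwn leA lejw.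
  have lejA : (j * j.+1)%:R <= n%:R * p * (1 - p).
    by apply: le_trans leA; rewrite ler_nat leq_mul.
  have := pmf0 k; have := pmf0 (k + j); nra.
have lekwn : (k + w.+1 <= n.+1)%N by rewrite addnS ltnS ltnW.
have := ler_sum_window pmf0 lekwn.
rewrite binomial_pmf_sum => sum_le1.
have sum_half : \sum_(j < w.+1) (binomial_pmf n p k / 2)
    <= \sum_(j < w.+1) binomial_pmf n p (k + j).
  by apply: ler_sum => j _; apply: half; rewrite -ltnS.
have := le_trans sum_half sum_le1.
rewrite sumr_const card_ord -mulr_natr ler_pdivlMr ?ltr0n // => h.
lra.
Qed.

Lemma binomial_pmf_le_succ n p k : 0 < p < 1 -> k.+1%:R <= n%:R * p ->
  binomial_pmf n p k <= binomial_pmf n p k.+1 * expR (k.+1%:R / (n%:R * p) - 1).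
Proof.
move=> /andP[p0 p1] lekn.
have pmf0 i : 0 <= binomial_pmf n p i by apply: binomial_pmf_ge0; lra.
have np0 : 0 < n%:R * p by apply: lt_le_trans lekn; rewrite ltr0n.
have ltkn : (k < n)%N.
  rewrite -(ltr_nat R); apply: lt_le_trans (_ : k%:R < k.+1%:R) _; first by rewrite ltr_nat.
  by apply: le_trans lekn _; rewrite ler_piMr ?ler0n // ltW.
apply: le_trans (_ : _ <= binomial_pmf n p k.+1 * (k.+1%:R / (n%:R * p))) _; last first.
  apply: ler_wpM2l => //.
  by have := expR_ge1Dx (k.+1%:R / (n%:R * p) - 1); rewrite addrC subrK.
have pos : 0 < (n - k)%:R * p by rewrite mulr_gt0 // ltr0n subn_gt0.
rewrite -(ler_pM2r pos) -binomial_pmfS // -mulrA ler_wpM2l //.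
rewrite natrB ?(ltnW ltkn) // -natr1 -mulrA ler_wpM2l ?addr_ge0 ?ler0n //.
by rewrite mulrC ler_pdivlMr //; rewrite -natr1 in lekn; nra.
Qed.

Lemma binomial_pmf_tail n p k D : 0 < p < 1 -> (k + D)%:R <= n%:R * p ->
  binomial_pmf n p k
  <= binomial_pmf n p (k + D) * expR (- (D%:R * (D%:R - 1)) / (2 * (n%:R * p))).
Proof.
move=> p01; have /andP[p0 p1] := p01.
elim: D k => [|D IH] k lekDn; first by rewrite addn0 mul0r oppr0 mul0r expR0 mulr1.
have lek1n : k.+1%:R <= n%:R * p.
  by apply: le_trans lekDn; rewrite ler_nat addnS ltnS leq_addr.
have np0 : 0 < n%:R * p by apply: lt_le_trans lek1n; rewrite ltr0n.
apply: le_trans (binomial_pmf_le_succ p01 lek1n) _.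
have := IH k.+1; rewrite addSnnS => /(_ lekDn) IHk.
apply: le_trans (ler_wpM2r (expR_ge0 _) IHk) _.
rewrite -mulrA; apply: ler_wpM2l; first by apply: binomial_pmf_ge0; lra.
rewrite -expRD ler_expR.
set a := n%:R * p in lekDn np0 *.
rewrite -subr_ge0.
have -> : - (D.+1%:R * (D.+1%:R - 1)) / (2 * a)
    - (- (D%:R * (D%:R - 1)) / (2 * a) + (k.+1%:R / a - 1)) = (a - (k + D.+1)%:R) / a.
  by rewrite -[D.+1]addn1 -[k.+1]addn1 !natrD; field; rewrite lt0r_neq0.
by rewrite divr_ge0 ?subr_ge0 // ltW.
Qed.

Lemma natr_mulB1_ge0 (D : nat) : 0 <= D%:R * (D%:R - 1) :> R.
Proof. by case: D => [|D]; rewrite ?mul0r // mulr_ge0 ?ler0n // subr_ge0 ler1n. Qed.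

Lemma binomial_pmf_gauss_le n p k D s : 0 < p < 1 -> 1 <= s ->
  2 * s <= n%:R * p -> 2 * s <= n%:R * (1 - p) -> 2 * s ^+ 2 <= n%:R * p * (1 - p) ->
  D%:R <= `|k%:R - n%:R * p| ->
  binomial_pmf n p k <= 2 / s * expR (- (D%:R * (D%:R - 1)) / (2 * n%:R)).
Proof.
move=> p01 s1; wlog lekn : p k p01 / k%:R <= n%:R * p.
  move=> gen snp snq s2 Dk; have /andP[p0 p1] := p01.
  have [|gtkn] := lerP k%:R (n%:R * p); first by move/gen; apply.
  have [ltnk|lekn] := ltnP n k.
    by rewrite binomial_pmf_small // mulr_ge0 ?expR_ge0 // divr_ge0 //; lra.
  have p01' : 0 < 1 - p < 1 by apply/andP; lra.
  have qE : 1 - (1 - p) = p by ring.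
  rewrite binomial_pmf_sym //; apply: gen; rewrite ?qE ?natrB //; try lra.
  suff -> : n%:R - k%:R - n%:R * (1 - p) = - (k%:R - n%:R * p) by rewrite normrN.
  by ring.
move=> snp snq s2 Dk; have /andP[p0 p1] := p01.
rewrite distrC ger0_norm ?subr_ge0 // in Dk.
have lekDn : (k + D)%:R <= n%:R * p by rewrite natrD; lra.
have n0 : 0 < n%:R :> R by rewrite -(pmulr_lgt0 _ p0); lra.
have /andP[ws sw] := truncn_itv (ltW (lt_le_trans ltr01 s1)).
set w := Num.trunc s in ws sw.
apply: le_trans (binomial_pmf_tail p01 lekDn) _.
apply: ler_pM; rewrite ?expR_ge0 ?binomial_pmf_ge0 //; try lra.
  apply: le_trans (binomial_pmf_window_le (w := w) p01 lekDn _ _) _.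
  - rewrite -natr1; lra.
  - apply: le_trans s2; rewrite natrM -natr1; nra.
  by rewrite ler_pM2l // lef_pV2 ?posrE ?ltr0n //; lra.
rewrite ler_expR !mulNr lerN2; apply: ler_wpM2l; first exact: natr_mulB1_ge0.
by rewrite lef_pV2 ?posrE ?mulr_gt0 // ler_pM2l // ger_pMr // ltW.
Qed.

End binomial_pmf_bounds.

Lemma binz_predn_le_bin (X N : nat) : (binz (X%:Z - 1) (N%:Z - 1) <= 'C(X, N))%N.
Proof.
have predE n : n.+1%:Z - 1 = n.
  by rewrite intS addrC addKr.
case: N => [|N] //; case: X => [|X]; rewrite /binz !predE //.
by case: ifP => // _; rewrite !absz_nat binS leq_addl.
Qed.

Section binomial_weight.
Variable R : realType.

Lemma exprz_weightE (u : R) (d X N : nat) : u != 0 -> u != 1 -> (0 < d)%N ->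
  (N <= X)%N ->
  (u / (u - 1)) ^ (d%:Z * N%:Z - X%:Z) * (u ^+ d / (u - 1) ^+ d.-1) ^ (- N%:Z)
  = (1 / u) ^+ N * (1 - 1 / u) ^+ (X - N).
Proof.
move=> u0 u1 d0 leNX; have v0 : u - 1 != 0 by rewrite subr_eq0.
rewrite expfzDr ?mulf_neq0 ?invr_eq0 // -PoszM -!exprnN -!exprnP exprM.
rewrite -(subnKC leNX) addKn -(prednK d0) /=.
have -> : 1 - 1 / u = (u - 1) / u by field.
rewrite !exprMn !exprVn !exprSr !exprMn !exprD expr1n.
by field; rewrite !expf_neq0.
Qed.

Lemma weight_le_binomial_pmf (u : R) (d : nat) (X N : int) : 1 < u -> (0 < d)%N ->
  (u / (u - 1)) ^ (d%:Z * N - X) * (u ^+ d / (u - 1) ^+ d.-1) ^ (- N)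
    * (binz (X - 1) (N - 1))%:R
  <= binomial_pmf `|X|%N (1 / u) `|N|%N.
Proof.
move=> u1 d0; have p01 : 0 <= 1 / u <= 1 by apply/andP; split; rewrite ?ler_pdivrMr ?divr_ge0; lra.
have [/andP[N1 NX]|] := boolP ((0 <= N - 1) && (N - 1 <= X - 1)); last first.
  by move=> /negbTE nb; rewrite /binz nb mulr0 binomial_pmf_ge0.
rewrite lerD2r in NX; rewrite subr_ge0 in N1.
have N0 : 0 <= N by apply: le_trans N1.
have X0 : 0 <= X by apply: le_trans NX.
rewrite -(gez0_abs N0) -(gez0_abs X0) lez_nat in NX *.
rewrite !absz_nat exprz_weightE ?gt_eqF ?subr_eq0 ?lt_eqF //; try lra.
rewrite binomial_pmfE mulrC -mulrA ler_wpM2r ?ler_nat ?binz_predn_le_bin //.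
by rewrite mulr_ge0 // exprn_ge0 // ?subr_ge0; case/andP: p01.
Qed.
End binomial_weight.

Section gaussian_estimate.
Variable R : realType.

Lemma expR_neg_sqr_le (g s : R) : 0 < g ->
  expR (- (g * s ^+ 2)) <= expR (1 / (4 * g)) * expR (- `|s|).
Proof.
move=> g0; rewrite -expRD ler_expR -subr_ge0 -[s ^+ 2]real_normK ?num_real //.
have -> : 1 / (4 * g) + - `|s| - - (g * `|s| ^+ 2) = (2 * g * `|s| - 1) ^+ 2 / (4 * g).
  by field; rewrite gt_eqF.
by rewrite divr_ge0 ?sqr_ge0 // ltW // mulr_gt0.
Qed.

Lemma tail_exponent_ge (u Q e x y : R) (D : nat) : 1 <= u -> 0 < x -> x <= 2 * Q ->
  `|x - (Q + e)| < 1 -> `|y - Q / u| < 1 -> e = 0 \/ 8 * u <= `|e| ->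
  `|y - x / u| < D.+1%:R ->
  e ^+ 2 / (16 * u ^+ 2 * Q) <= D%:R * (D%:R - 1) / (2 * x).
Proof.
move=> u1 x0 xQ xe yQ e8 yxD.
case: e8 => [->|e8].
  by rewrite expr0n mul0r divr_ge0 ?natr_mulB1_ge0 //; lra.
have u0 : 0 < u by lra.
have Q0 : 0 < Q by lra.
move: xe; rewrite ltr_norml => /andP[xe1 xe2].
have uyQ : - u < u * y - Q < u.
  have -> : u * y - Q = u * (y - Q / u) by field; rewrite gt_eqF.
  by rewrite -ltr_norml normrM gtr0_norm // gtr_pMr.
case/andP: uyQ => uyQ1 uyQ2.
have dev_u : `|e| / 2 + 2 * u <= `|u * y - x|.
  rewrite ler_normr; apply/orP; have [e0|e0] := lerP 0 e.
  - by right; rewrite ger0_norm // in e8 *; lra.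
  - by left; rewrite ltr0_norm // in e8 *; lra.
have dev : `|e| / (2 * u) + 1 < D%:R.
  move: yxD; rewrite -natr1.
  have -> : y - x / u = (u * y - x) / u by field; rewrite gt_eqF.
  rewrite normrM normfV (gtr0_norm u0).
  have -> : `|e| / (2 * u) = (`|e| / 2) / u by field; rewrite gt_eqF.
  move=> h; have : (`|e| / 2 + 2 * u) / u < D%:R + 1.
    by apply: le_lt_trans h; rewrite ler_pM2r ?invr_gt0.
  have -> : (`|e| / 2 + 2 * u) / u = `|e| / 2 / u + 2 by field; rewrite gt_eqF.
  lra.
set L := `|e| / (2 * u) in dev.
have L0 : 0 <= L by rewrite divr_ge0 ?mulr_ge0; lra.
have LD : L ^+ 2 <= D%:R * (D%:R - 1).
  have h1 : 0 <= D%:R - 1 - L by lra.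
  have h2 : 0 <= D%:R - 1 + L by lra.
  by have := mulr_ge0 h1 h2; nra.
have -> : e ^+ 2 / (16 * u ^+ 2 * Q) = L ^+ 2 / (4 * Q).
  by rewrite /L -[e ^+ 2]real_normK ?num_real //; field; rewrite !gt_eqF.
apply: le_trans (_ : L ^+ 2 / (2 * x) <= _); last by rewrite ler_wpM2r // invr_ge0; lra.
by rewrite ler_wpM2l ?sqr_ge0 // lef_pV2 ?posrE; lra.
Qed.

End gaussian_estimate.

Section scaled_binomial_pmf.
Variable R : realType.

Lemma binomial_pmf_inv_gauss_le (u c b t : R) (X N D : nat) : 2 <= u -> 0 < b ->
  4 * b ^+ 2 <= c * (1 / u) * (1 - 1 / u) -> 1 <= b * t -> 4 * b <= c * (1 / u) * t ->
  c * t ^+ 2 / 2 <= X%:R -> D%:R <= `|N%:R - X%:R / u| ->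
  binomial_pmf X (1 / u) N <= 2 / (b * t) * expR (- (D%:R * (D%:R - 1)) / (2 * X%:R)).
Proof.
move=> u2 b0; set p := 1 / u => bc bt1 btc XQ DN.
have t0 : 0 < t by rewrite -(pmulr_rgt0 _ b0); lra.
have p0 : 0 < p by rewrite divr_gt0 //; lra.
have p12 : p <= 1 / 2 by rewrite /p ler_pdivrMr; lra.
have Xp := ler_wpM2r (ltW p0) XQ.
have tbc := ler_wpM2r (ltW t0) btc.
have Xpq : c * t ^+ 2 / 2 * (p * (1 - p)) <= X%:R * (p * (1 - p)).
  by rewrite ler_wpM2r // mulr_ge0 //; lra.
apply: binomial_pmf_gauss_le => //.
- by apply/andP; lra.
- nra.
- have : 0 <= X%:R * (1 - 2 * p) by rewrite mulr_ge0 ?ler0n //; lra.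
  nra.
- by have := ler_wpM2r (sqr_ge0 t) bc; nra.
- by rewrite mulrA mulr1.
Qed.

Lemma scaled_binomial_pmf_le (u k c b s t : R) (X N : nat) :
  2 <= u -> 0 < k -> 0 < c -> 0 < b -> 4 * b ^+ 2 <= c * (1 / u) * (1 - 1 / u) ->
  1 <= b * t -> 4 * b <= c * (1 / u) * t -> k * `|s| * t + 2 <= c * t ^+ 2 / 2 ->
  s = 0 \/ 8 * u <= k * `|s| * t ->
  `|X%:R - (c * t ^+ 2 + k * s * t)| < 1 -> `|N%:R - c * t ^+ 2 / u| < 1 ->
  k * t * binomial_pmf X (1 / u) N
  <= 2 * k / b * expR (1 / (4 * (k ^+ 2 / (16 * u ^+ 2 * c)))) * expR (- `|s|).
Proof.
move=> u2 k0 c0 b0 bc bt1 btc st s8 Xt Nt.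
have t0 : 0 < t by rewrite -(pmulr_rgt0 _ b0); lra.
have u0 : 0 < u by lra.
pose Q := c * t ^+ 2; rewrite -/Q in st Xt Nt.
have Q0 : 0 < Q by rewrite mulr_gt0 // exprn_gt0.
have /andP[sL sR] : - (k * `|s| * t) <= k * s * t <= k * `|s| * t.
  by rewrite -ler_norml !normrM (gtr0_norm k0) (gtr0_norm t0).
have /andP[Xt1 Xt2] : -1 < X%:R - (Q + k * s * t) < 1 by rewrite -ltr_norml.
have [XQ1 XQ2] : Q / 2 <= X%:R /\ X%:R <= 2 * Q by split; lra.
have /andP[DN ND] := truncn_itv (normr_ge0 (N%:R - X%:R / u)).
set D := Num.trunc _ in DN ND.
have gauss := binomial_pmf_inv_gauss_le u2 b0 bc bt1 btc XQ1 DN.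
have tail : (k * s * t) ^+ 2 / (16 * u ^+ 2 * Q) <= D%:R * (D%:R - 1) / (2 * X%:R).
  apply: tail_exponent_ge Xt Nt _ ND => //; try lra.
  rewrite !normrM (gtr0_norm k0) (gtr0_norm t0).
  by case: s8 => [->|]; [left; rewrite mulr0 mul0r | right].
have g0 : 0 < k ^+ 2 / (16 * u ^+ 2 * c) by rewrite divr_gt0 ?mulr_gt0 ?exprn_gt0.
apply: le_trans (ler_wpM2l (_ : 0 <= k * t) gauss) _; first by rewrite mulr_ge0 ?ltW.
have -> : k * t * (2 / (b * t) * expR (- (D%:R * (D%:R - 1)) / (2 * X%:R)))
    = 2 * k / b * expR (- (D%:R * (D%:R - 1)) / (2 * X%:R)).
  by field; rewrite !gt_eqF.
rewrite -[X in _ <= X]mulrA; apply: ler_wpM2l; first by rewrite divr_ge0 ?mulr_ge0 ?ltW.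
apply: le_trans (expR_neg_sqr_le s g0); rewrite ler_expR mulNr lerN2.
apply: le_trans tail; rewrite le_eqVlt; apply/orP; left; apply/eqP.
by rewrite /Q; field; rewrite !gt_eqF.
Qed.

Lemma intr_dist_lt1_ge0 (z : int) (a : R) : 0 <= a -> `|z%:~R - a| < 1 -> 0 <= z.
Proof.
move=> a0; rewrite ltr_norml => /andP[za _].
by rewrite -ltzD1 -(ltr0z R) intrD mulr1z; lra.
Qed.

Lemma scaled_binomial_pmf_gauss (u k c : R) : 2 <= u -> 0 < k -> 0 < c ->
  exists C : R, forall s : R, exists t0 : R, forall (t : R) (X N : int), t0 <= t ->
    `|X%:~R - (c * t ^+ 2 + k * s * t)| < 1 -> `|N%:~R - c * t ^+ 2 / u| < 1 ->
    k * t * binomial_pmf `|X|%N (1 / u) `|N|%N <= C * expR (- `|s|).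
Proof.
move=> u2 k0 c0; set p := 1 / u.
have p0 : 0 < p by rewrite divr_gt0 //; lra.
have p1 : p < 1 by rewrite /p ltr_pdivrMr; lra.
have cpq0 : 0 < c * p * (1 - p).
  by apply: mulr_gt0; [exact: mulr_gt0 | rewrite subr_gt0].
pose b := Num.sqrt (c * p * (1 - p)) / 2.
have b0 : 0 < b by rewrite divr_gt0 ?sqrtr_gt0.
have bc : 4 * b ^+ 2 <= c * p * (1 - p).
  by rewrite expr_div_n sqr_sqrtr ?(ltW cpq0) // expr2; lra.
clearbody b.
exists (2 * k / b * expR (1 / (4 * (k ^+ 2 / (16 * u ^+ 2 * c))))) => s.
(* For s = 0 the last summand is 8 u / 0 = 0; no lower bound on k |s| t is needed then. *)
exists (1 + 1 / b + 4 * b / (c * p) + (2 * k * `|s| + 4) / c + 8 * u / (k * `|s|)).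
move=> t X N tt0 Xt Nt.
have s0 := normr_ge0 s.
have h1 : 0 <= 1 / b by apply: divr_ge0; lra.
have h2 : 0 <= 4 * b / (c * p) by apply: divr_ge0; nra.
have h3 : 0 <= (2 * k * `|s| + 4) / c by apply: divr_ge0; nra.
have h4 : 0 <= 8 * u / (k * `|s|) by apply: divr_ge0; nra.
have t1 : 1 <= t by lra.
have t0 : 0 < t by lra.
have bt1 : 1 <= b * t by rewrite -ler_pdivrMl //; lra.
have cp0 : 0 < c * p by rewrite mulr_gt0.
have btc : 4 * b <= c * p * t by rewrite -ler_pdivrMl //; lra.
have st : k * `|s| * t + 2 <= c * t ^+ 2 / 2.
  have : 2 * k * `|s| + 4 <= c * t by rewrite -ler_pdivrMl //; lra.
  by move/(ler_wpM2r (ltW t0)); nra.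
have s8 : s = 0 \/ 8 * u <= k * `|s| * t.
  have [->|sn0] := eqVneq s 0; [by left | right].
  have ks0 : 0 < k * `|s| by rewrite mulr_gt0 ?normr_gt0.
  by rewrite -ler_pdivrMl //; lra.
have ksL : - (k * `|s| * t) <= k * s * t.
  by apply: lerNnormlW; rewrite !normrM (gtr0_norm k0) (gtr0_norm t0).
have X0 : 0 <= X by apply: intr_dist_lt1_ge0 Xt; nra.
have N0 : 0 <= N by apply: intr_dist_lt1_ge0 Nt; rewrite divr_ge0 ?mulr_ge0 ?sqr_ge0; lra.
rewrite -(gez0_abs X0) -(gez0_abs N0) in Xt Nt.
exact: scaled_binomial_pmf_le.
Qed.

End scaled_binomial_pmf.

Section rescaling.
Variable R : realType.

Lemma kappa_gt0 (p d : R) : 0 < p < 1 -> 1 < d -> 0 < kappa p d.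
Proof.
move=> /andP[p0 p1] d1; rewrite /kappa divr_gt0 // ?subr_gt0; last lra.
by rewrite mulr_gt0 // powR_gt0 //; nra.
Qed.

Lemma powR_two_thirds (t : R) : 0 <= t -> t `^ (2 / 3) = (t `^ (1 / 3)) ^+ 2.
Proof.
by move=> t0; rewrite -powR_mulrn ?powR_ge0 // -powRrM; congr (_ `^ _); lra.
Qed.

Lemma ler_powR_third (a t : R) : 0 <= a -> a ^+ 3 <= t -> a <= t `^ (1 / 3).
Proof.
move=> a0 at3; have a30 : 0 <= a ^+ 3 by rewrite exprn_ge0.
have := ge0_ler_powR (_ : 0 <= 1 / 3) a30 (le_trans a30 at3) at3.
rewrite -powR_mulrn // -powRrM (_ : 3%:R * (1 / 3) = 1) ?powRr1 //; last lra.
by apply; lra.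
Qed.

Lemma floorB_dist_lt1 (a b z : R) : a - b = z ->
  `|(Num.floor a - Num.floor b)%:~R - z| < 1.
Proof.
move=> <-; rewrite intrB ltr_norml.
have /andP[fa1 fa2] := floor_itv a; have /andP[fb1 fb2] := floor_itv b.
rewrite !intrD !mulr1z in fa2 fb2.
by apply/andP; split; lra.
Qed.

End rescaling.

Unset Implicit Arguments.

Theorem proposition5p5 (R : realType) (p : R) (d : nat) (r1 r2 : R) :
  0 < p < 1 -> (2 <= d)%N -> 0 < r2 - r1 ->
  exists C1 : R, forall s1 s2 : R, exists T : R, forall t : R, T <= t ->
    let dR := d%:R : R in
    let x1 := xi p dR r1 s1 t in
    let x2 := xi p dR r2 s2 t in
    let n1 := ni p dR r1 t in
    let n2 := ni p dR r2 t in
    kappa p dR * powR t (1 / 3)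
      * (dR / (dR - 1)) ^ (x2 + d%:Z * n2 - (x1 + d%:Z * n1))
      * (dR ^+ d / (dR - 1) ^+ d.-1) ^ (n1 - n2)
      * (binz (x1 - x2 - 1) (n2 - n1 - 1))%:R
    <= C1 * expR (- `|s2 - s1|).
Proof.
move=> p01 d2 r12; have u2 : 2 <= d%:R :> R by rewrite ler_nat.
have k0 : 0 < kappa p d%:R by apply: kappa_gt0; lra.
pose c := kappa p d%:R ^+ 2 * (2 / (d%:R - 1)) * (r2 - r1).
have c0 : 0 < c.
  by apply: mulr_gt0; [apply: mulr_gt0; [exact: exprn_gt0 | apply: divr_gt0] |]; lra.
have [C est] := scaled_binomial_pmf_gauss u2 k0 c0.
exists C => s1 s2; have [t0 est_s] := est (s2 - s1).
exists (Num.max 0 t0 ^+ 3) => t Ht /=.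
have t_ge0 : 0 <= t by apply: le_trans Ht; rewrite exprn_ge0 // le_max lexx.
have t0t : t0 <= t `^ (1 / 3).
  by apply: le_trans (ler_powR_third _ Ht); rewrite ?le_max lexx ?orbT.
set x1 := xi _ _ r1 s1 t; set x2 := xi _ _ r2 s2 t.
set n1 := ni _ _ r1 t; set n2 := ni _ _ r2 t.
have -> : x2 + d%:Z * n2 - (x1 + d%:Z * n1) = d%:Z * (n2 - n1) - (x1 - x2) by ring.
have -> : n1 - n2 = - (n2 - n1) by ring.
apply: le_trans (est_s _ (x1 - x2) (n2 - n1) t0t _ _).
- rewrite -2!mulrA; apply: ler_wpM2l; first by rewrite mulr_ge0 ?powR_ge0 ?ltW.
  by rewrite mulrA; apply: weight_le_binomial_pmf; [lra | apply: leq_trans d2].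
- rewrite /x1 /x2 /xi powR_two_thirds //; apply: floorB_dist_lt1; rewrite /c; ring.
- rewrite /n1 /n2 /ni powR_two_thirds //; apply: floorB_dist_lt1; rewrite /c.
  by field; rewrite !gt_eqF //; lra.
Qed.
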